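(* Let $n\geq 1$, let $H$ be an irreducible subgroup of $SL(n,\mathbb{C})$, let $u\in U_n(H)$ and suppose $\pi_n(u)$ has order $d$ in $Z_n(H)$. Then $u$ is conjugate in $SL(n,\mathbb{C})$ to the block diagonal matrix $$\lambda\,\mathrm{diag}\big(I_{n/d},\ \xi^{n/d}I_{n/d},\ \xi^{2n/d}I_{n/d},\dots,\ \xi^{(n/d)(d-1)}I_{n/d}\big)$$ for some $\lambda\in\mathbb{C}^*$, where $\lambda\in\langle\xi\rangle$ if $d$ is odd or if $d$ and $n/d$ are both even, and $\lambda\in \mu\langle \xi\rangle$ where $\mu$ is a square root of $\xi^{-(n/d)(d-1)}$ if $d$ is even and $n/d$ is odd.
   Context: Let $\xi=e^{2\pi i/n}$; the center of $SL(n,\mathbb{C})$ is $\langle \xi I_n\rangle$. $\pi_n:SL(n,\mathbb{C})\to PSL(n,\mathbb{C})=SL(n,\mathbb{C})/\langle \xi I_n\rangle$ is the quotient map. A subgroup $H\le SL(n,\mathbb{C})$ is irreducible if no nonzero proper subspace of $\mathbb{C}^n$ is $H$-invariant. $Z_n(H)$ is the centralizer of $\pi_n(H)$ in $PSL(n,\mathbb{C})$, and $U_n(H)=\pi_n^{-1}(Z_n(H))=\{g\in SL(n,\mathbb{C}) : [g,h]\in\langle\xi I_n\rangle \text{ for all } h\in H\}$, where $[g,h]=ghg^{-1}h^{-1}$. *)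

From HB Require Import structures.
From mathcomp Require Import all_boot all_order all_algebra.
Set Implicit Arguments. Unset Strict Implicit. Unset Printing Implicit Defensive.
Import Order.TTheory GRing.Theory Num.Theory.
Local Open Scope ring_scope.

Section Defs.
Variables (C : numClosedFieldType) (n : nat).

Definition inSL (g : 'M[C]_n) : Prop := \det g = 1.

Definition subgroup_SL (H : 'M[C]_n -> Prop) : Prop :=
  [/\ H 1%:M,
      (forall g h, H g -> H h -> H (g *m h)),
      (forall g, H g -> H (invmx g)) &
      (forall g, H g -> inSL g)].

(* A subspace of C^n (column vectors) is encoded as the row space of W,
   whose rows are the transposes of the vectors.  W is H-invariant iff
   for every h in H and column vector v in the space, h v is in the space,
   i.e. (W *m h^T <= W)%MS. *)
Definition invariant_subspace (H : 'M[C]_n -> Prop) (W : 'M[C]_n) : Prop :=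
  forall h, H h -> (W *m h^T <= W)%MS.

Definition irreducible_sub (H : 'M[C]_n -> Prop) : Prop :=
  forall W : 'M[C]_n, invariant_subspace H W -> \rank W = 0%N \/ \rank W = n.

Definition in_center (xi : C) (g : 'M[C]_n) : Prop :=
  exists k : nat, g = (xi ^+ k)%:M.

Definition commg_mx (g h : 'M[C]_n) : 'M[C]_n :=
  g *m h *m invmx g *m invmx h.

(* U_n(H) = pi_n^{-1}(Z_n(H)) *)
Definition U_set (xi : C) (H : 'M[C]_n -> Prop) (g : 'M[C]_n) : Prop :=
  inSL g /\ forall h, H h -> in_center xi (commg_mx g h).

(* pi_n(u) has order d in PSL(n,C) (equivalently in the subgroup Z_n(H)) *)
Definition proj_order (xi : C) (u : 'M[C]_n) (d : nat) : Prop :=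
  [/\ (0 < d)%N, in_center xi (u ^+ d) &
      forall m : nat, (0 < m < d)%N -> ~ in_center xi (u ^+ m)].

(* diag(I_{n/d}, xi^{n/d} I_{n/d}, ..., xi^{(n/d)(d-1)} I_{n/d}):
   the i-th diagonal entry (0 <= i < n) lies in block i %/ (n/d). *)
Definition block_diag_roots (xi : C) (d : nat) : 'M[C]_n :=
  diag_mx (\row_(i < n) xi ^+ ((n %/ d) * (i %/ (n %/ d)))).

End Defs.

From HB Require Import structures.
From mathcomp Require Import all_boot all_order all_algebra all_fingroup.
From mathcomp Require Import zify.
From Stdlib Require Import Classical.
Import Order.TTheory GRing.Theory Num.Theory.
Set Implicit Arguments. Unset Strict Implicit. Unset Printing Implicit Defensive.
Local Open Scope ring_scope.

(* For h in H we have u h = xi^k h u, and the exponents k that occur are exactly the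
   multiples of some g dividing n.  Hence u^N, N = n/g, commutes with H and is a scalar c
   by Schur's lemma, so u is diagonalizable with eigenvalues among the N-th roots
   a0 * w^t of c, where w = xi^g.  Conjugating u by an h of exponent g multiplies its
   spectrum by w, so every a0 * w^t occurs with the same multiplicity, namely g; sorting
   the eigenbasis gives the block form with d = N.  Finally det u = 1 forces
   a0^n = (-1)^(g(N-1)), which is the stated condition on lambda. *)

Lemma ex_minimal (P : nat -> Prop) :
  (exists k, P k) -> exists k, P k /\ forall j, (j < k)%N -> ~ P j.
Proof.
move=> [k Pk]; apply: NNPP => nomin; elim/ltn_ind: k Pk => k IH Pk.
by apply: nomin; exists k; split=> // j /IH.
Qed.

Lemma sub_closed_dvdn (S : nat -> Prop) m : (0 < m)%N -> S m ->
    (forall a b, S a -> S b -> S (a + b)%N) ->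
    (forall a b, (b <= a)%N -> S a -> S b -> S (a - b)%N) ->
  exists g, [/\ (0 < g)%N, S g & forall k, S k <-> (g %| k)%N].
Proof.
move=> m_gt0 Sm SD SB.
have [g [[g_gt0 Sg] g_min]] : exists g, ((0 < g)%N /\ S g) /\
    forall j, (j < g)%N -> ~ ((0 < j)%N /\ S j).
  by apply: ex_minimal; exists m.
have S_mul q : S (q * g)%N.
  elim: q => [|q IHq]; first by rewrite mul0n -(subnn m); apply: SB.
  by rewrite mulSn; apply: SD.
exists g; split=> // k; split=> [Sk|/dvdnP[q ->] //].
have Smod : S (k %% g)%N.
  have -> : (k %% g = k - k %/ g * g)%N by rewrite {2}(divn_eq k g) addKn.
  by apply: SB => //; rewrite leq_trunc_div.
rewrite /dvdn; case: (posnP (k %% g)) => [/eqP //|mod_gt0].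
by case: (g_min _ (ltn_pmod k g_gt0)).
Qed.

Lemma map_iota_divn (T : Type) (F : nat -> T) g N : (0 < g)%N ->
  [seq F (i %/ g)%N | i <- iota 0 (N * g)] = flatten [seq nseq g (F t) | t <- iota 0 N].
Proof.
move=> g_gt0; elim: N => [|N IHN] //.
rewrite mulSnr iotaD map_cat IHN -addn1 iotaD map_cat flatten_cat /= cats0.
congr (_ ++ _); apply: (@eq_from_nth _ (F N)); rewrite size_map size_iota ?size_nseq //.
move=> i lt_ig; rewrite (nth_map 0) ?size_iota // nth_iota // nth_nseq lt_ig.
by rewrite divnMDl // divn_small ?addn0.
Qed.

Lemma sum_divn_blocks (F : nat -> nat) g N : (0 < g)%N ->
  (\sum_(i < N * g) F (i %/ g) = \sum_(t < N) F t * g)%N.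
Proof.
move=> g_gt0; rewrite -(big_mkord xpredT (fun i => F (i %/ g)%N)).
rewrite -(big_mkord xpredT (fun t => F t * g)%N) /index_iota !subn0.
rewrite -(big_map (fun i => i %/ g)%N xpredT F) (map_iota_divn id) // big_flatten big_map.
by apply: eq_bigr => t _; rewrite big_nseq iter_addn_0.
Qed.

Lemma double_sum_ord N : (2 * \sum_(t < N) t = N * N.-1)%N.
Proof.
elim: N => [|N IHN]; first by rewrite big_ord0.
by rewrite big_ord_recr /= mulnDr IHN; case: N {IHN} => //= N; lia.
Qed.

Lemma perm_flatten_nseq (T : eqType) (s r : seq T) m :
    uniq r -> {subset s <= r} -> {in r, forall x, count_mem x s = m} ->
  perm_eq s (flatten [seq nseq m x | x <- r]).
Proof.
move=> r_uniq sr count_s; apply/allP => x _; apply/eqP.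
have -> : count_mem x (flatten [seq nseq m y | y <- r]) = (count_mem x r * m)%N.
  by rewrite count_flatten; elim: (r) => //= y r' ->; rewrite count_nseq mulnDl.
have [xr|xNr] := boolP (x \in r); first by rewrite count_s // count_uniq_mem // xr mul1n.
rewrite (count_memPn xNr); apply/count_memPn; exact: contra (sr x) xNr.
Qed.

Lemma prim_root_expr_half (R : idomainType) n (z : R) e k :
  n.-primitive_root z -> (2 * e = n * k)%N -> z ^+ e = (-1) ^+ k.
Proof.
move=> z_prim e2; have n_gt0 := prim_order_gt0 z_prim.
have [k_odd|k_even] := boolP (odd k).
  have n_even : ~~ odd n.
    by apply: contraT => /negbNE n_odd; move: (congr1 odd e2); rewrite !oddM n_odd k_odd.
  have n2 : n = (2 * n./2)%N by rewrite -[LHS]odd_double_half (negPf n_even) add0n mul2n.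
  have -> : e = (n./2 * k)%N.
    by apply/eqP; rewrite -(eqn_pmul2l (isT : (0 < 2)%N)) mulnA -n2 e2.
  rewrite exprM; suff -> : z ^+ n./2 = -1 by [].
  have z_half_neq1 : z ^+ n./2 != 1.
    by rewrite -(expr0 z) (eq_prim_root_expr z_prim) mod0n modn_small; lia.
  have : (z ^+ n./2) ^+ 2 = 1 by rewrite -exprM mulnC -n2 prim_expr_order.
  by move/eqP; rewrite sqrf_eq1 (negPf z_half_neq1) => /eqP.
have -> : e = (n * k./2)%N.
  by apply/eqP; rewrite -(eqn_pmul2l (isT : (0 < 2)%N)) e2 mulnCA mul2n even_halfK.
by rewrite exprM (prim_expr_order z_prim) expr1n -signr_odd (negPf k_even).
Qed.

Section MatrixFacts.
Variable F : fieldType.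

Lemma char_poly_conj n (P A : 'M[F]_n) : P \in unitmx ->
  char_poly (P *m A *m invmx P) = char_poly A.
Proof.
move=> P_unit; rewrite /char_poly /char_poly_mx.
set Pc := map_mx polyC P; set Qc := map_mx polyC (invmx P).
have PQ : Pc *m Qc = 1%:M by rewrite -map_mxM mulmxV // map_mx1.
have QP : Qc *m Pc = 1%:M by rewrite -map_mxM mulVmx // map_mx1.
have -> : 'X%:M - map_mx polyC (P *m A *m invmx P) = Pc *m ('X%:M - map_mx polyC A) *m Qc.
  by rewrite !map_mxM mulmxBr mulmxBl mul_mx_scalar -scalemxAl -mul_mx_scalar PQ mul1mx -mulmxA.
by rewrite !det_mulmx mulrC mulrA -det_mulmx QP det1 mul1r.
Qed.

Lemma char_poly_diag n (d : 'rV[F]_n) :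
  char_poly (diag_mx d) = \prod_(i < n) ('X - (d 0 i)%:P).
Proof.
rewrite char_poly_trig ?diag_mx_is_trig //.
by apply: eq_bigr => i _; rewrite mxE eqxx mulr1n.
Qed.

Lemma perm_conj_diag n (p : 'S_n) (d : 'rV[F]_n) :
  perm_mx p *m diag_mx d *m invmx (perm_mx p) = diag_mx (\row_i d 0 (p i)).
Proof.
rewrite -[RHS](mulmxK (unitmx_perm _ p)); congr (_ *m _).
rewrite mul_mx_diag mul_diag_mx; apply/matrixP => i j; rewrite !mxE.
by case: eqP => [->|]; rewrite ?mulr1n ?mulr0n ?mulr0 ?mul0r ?mul1r ?mulr1.
Qed.

End MatrixFacts.

Lemma conj_SL (C : numClosedFieldType) n (P0 A : 'M[C]_n.+1) : P0 \in unitmx ->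
  exists P, inSL P /\ P *m A *m invmx P = P0 *m A *m invmx P0.
Proof.
move=> P0_unit; have det_neq0 : \det P0 != 0 by rewrite -unitfE -unitmxE.
set r := n.+1.-root (\det P0)^-1.
have r_expn : r ^+ n.+1 = (\det P0)^-1 by rewrite rootCK.
have r_neq0 : r != 0 by apply: contra_eq_neq r_expn => ->; rewrite expr0n eq_sym invr_eq0.
have P_unit : r *: P0 \in unitmx by rewrite unitmxE detZ r_expn mulVf // unitr1.
exists (r *: P0); split; first by rewrite /inSL detZ r_expn mulVf.
by rewrite invmxZ // -!scalemxAl -scalemxAr scalerA mulfV // scale1r.
Qed.

Lemma mulmx_expr_twist (R : comNzRingType) n (A B : 'M[R]_n) (c : R) m :
  A *m B = c *: (B *m A) -> A ^+ m *m B = c ^+ m *: (B *m A ^+ m).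
Proof.
move=> AB; elim: m => [|m IHm]; first by rewrite !expr0 mulmx1 mul1mx scale1r.
rewrite !exprSr -!mulmxE -mulmxA AB -scalemxAr [_ *m (B *m A)]mulmxA IHm.
by rewrite -scalemxAl scalerA mulrC mulmxA.
Qed.

Lemma irreducible_commute_scalar (C : numClosedFieldType) n (H : 'M[C]_n.+1 -> Prop)
    (A : 'M[C]_n.+1) :
  irreducible_sub H -> (forall h, H h -> A *m h = h *m A) -> exists a, A = a%:M.
Proof.
move=> H_irr A_comm.
have [a Aa] : exists a, eigenvalue A^T a.
  have : size (char_poly A^T) != 1%N by rewrite size_char_poly.
  by move=> /closed_rootP [a Ha]; exists a; rewrite eigenvalue_root_char.
(* Subspaces are row spaces on which h acts as h^T, hence the transposes. *)
have W_inv : invariant_subspace H (eigenspace A^T a).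
  move=> h Hh; apply: comm_mx_stable_eigenspace.
  by rewrite /comm_mx -!trmx_mul A_comm.
exists a; case: (H_irr _ W_inv) => [/eqP|W_full].
  by rewrite mxrank_eq0 => W0; move: Aa; rewrite /eigenvalue W0.
have /eigenspaceP : (1%:M <= eigenspace A^T a)%MS by rewrite sub1mx /row_full W_full.
by rewrite mul1mx scalemx1 => /(congr1 trmx); rewrite trmxK tr_scalar_mx.
Qed.

Lemma inSL_unit (C : numClosedFieldType) n (g : 'M[C]_n) : inSL g -> g \in unitmx.
Proof. by rewrite /inSL unitmxE => ->; rewrite unitr1. Qed.

Section TwistExponents.
Variables (C : numClosedFieldType) (n : nat) (xi : C) (H : 'M[C]_n -> Prop) (u : 'M[C]_n).
Hypotheses (xi_prim : n.-primitive_root xi) (H_group : subgroup_SL H).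

Definition twist_exponent (k : nat) : Prop :=
  exists2 h, H h & u *m h = xi ^+ k *: (h *m u).

Lemma subgroup_SL_unit h : H h -> h \in unitmx.
Proof. by case: H_group => _ _ _ HSL /HSL /inSL_unit. Qed.

Lemma twist_exponentD a b :
  twist_exponent a -> twist_exponent b -> twist_exponent (a + b).
Proof.
case: H_group => _ HM _ _ [h1 Hh1 E1] [h2 Hh2 E2]; exists (h1 *m h2); first exact: HM.
by rewrite mulmxA E1 -scalemxAl -mulmxA E2 -scalemxAr scalerA -exprD mulmxA addnC.
Qed.

Lemma twist_exponentB a b : (b <= a)%N ->
  twist_exponent a -> twist_exponent b -> twist_exponent (a - b).
Proof.
case: H_group => _ _ HV _ le_ba [h1 Hh1 E1] [h2 Hh2 E2].
have h2_unit := subgroup_SL_unit Hh2.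
have xi_unit : xi \is a GRing.unit.
  by rewrite unitfE (prim_root_eq0 xi_prim) -lt0n (prim_order_gt0 xi_prim).
exists (invmx h2 *m h1); first by case: H_group => _ HM _ _; apply: HM => //; apply: HV.
have E2' : invmx h2 *m u = xi ^+ b *: (u *m invmx h2).
  rewrite -[LHS](mulmxK h2_unit) -(mulmxA _ u) E2 -scalemxAr -scalemxAl mulmxA.
  by rewrite mulVmx // mul1mx.
apply: (@scalerI _ _ (xi ^+ b)); first by rewrite expf_neq0 // -unitfE.
rewrite scalerA -exprD subnKC // mulmxA scalemxAl -E2' -mulmxA E1 -scalemxAr.
by rewrite mulmxA.
Qed.

Lemma twist_exponent_order : twist_exponent n.
Proof.
case: H_group => H1 _ _ _; exists 1%:M => //.
by rewrite (prim_expr_order xi_prim) scale1r mulmx1 mul1mx.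
Qed.

Lemma twist_generator : exists g, [/\ (0 < g)%N, twist_exponent g &
  forall k, twist_exponent k <-> (g %| k)%N].
Proof.
apply: (sub_closed_dvdn (prim_order_gt0 xi_prim) twist_exponent_order).
  exact: twist_exponentD.
exact: twist_exponentB.
Qed.

Lemma U_set_twist h : U_set xi H u -> H h -> exists k, u *m h = xi ^+ k *: (h *m u).
Proof.
move=> [u_SL u_centr] Hh; have [k Ek] := u_centr h Hh; exists k.
have h_unit := subgroup_SL_unit Hh; have u_unit := inSL_unit u_SL.
move: Ek; rewrite /commg_mx => /(congr1 (mulmx^~ h)); rewrite mulmxKV //.
move=> /(congr1 (mulmx^~ u)); rewrite mulmxKV // => ->.
by rewrite mul_scalar_mx scalemxAl.
Qed.

End TwistExponents.

Section Spectrum.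
Variables (C : numClosedFieldType) (n' : nat) (xi : C).
Local Notation n := n'.+1.
Variables (H : 'M[C]_n -> Prop) (u : 'M[C]_n).
Hypotheses (xi_prim : n.-primitive_root xi) (H_group : subgroup_SL H)
  (H_irr : irreducible_sub H) (u_U : U_set xi H u).
Variable g : nat.
Hypotheses (g_gt0 : (0 < g)%N) (twist_g : twist_exponent xi H u g)
  (twist_dvd : forall k, twist_exponent xi H u k -> (g %| k)%N).

Local Notation N := (n %/ g)%N.
Local Notation w := (xi ^+ g).

Lemma n_eq_Ng : n = (N * g)%N.
Proof. by rewrite divnK // twist_dvd //; apply: twist_exponent_order. Qed.

Lemma N_gt0 : (0 < N)%N.
Proof. by move: (ltn0Sn n'); rewrite [in X in X -> _]n_eq_Ng muln_gt0 => /andP[]. Qed.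

Lemma twist_root_prim : N.-primitive_root w.
Proof.
have N_dvd : (N %| n)%N by rewrite [in X in (_ %| X)%N]n_eq_Ng dvdn_mulr.
by have := dvdn_prim_root xi_prim N_dvd; rewrite {2}n_eq_Ng mulKn // N_gt0.
Qed.

Lemma det_u : \det u = 1.
Proof. by case: u_U. Qed.

Lemma expN_twist_centralizes h : H h -> u ^+ N *m h = h *m u ^+ N.
Proof.
move=> Hh; have [k Ek] := U_set_twist H_group u_U Hh.
have /dvdnP [q kq] : (g %| k)%N by apply: twist_dvd; exists h.
rewrite (mulmx_expr_twist _ Ek) kq -exprM mulnAC -mulnA -n_eq_Ng mulnC exprM.
by rewrite (prim_expr_order xi_prim) expr1n scale1r.
Qed.

Lemma expN_scalar : exists c, u ^+ N = c%:M.
Proof. exact: irreducible_commute_scalar H_irr expN_twist_centralizes. Qed.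

Section Scalar.
Variable c : C.
Hypothesis uN : u ^+ N = c%:M.

Lemma scalar_expn : c ^+ n = 1.
Proof.
have detX m : \det (u ^+ m) = \det u ^+ m.
  by elim: m => [|m IHm]; rewrite ?det1 // !exprS detM IHm.
by rewrite -det_scalar -uN detX det_u expr1n.
Qed.

Lemma scalar_neq0 : c != 0.
Proof. by apply: contra_eq_neq scalar_expn => ->; rewrite expr0n eq_sym oner_neq0. Qed.

Local Notation a0 := (N.-root c).

Lemma base_root_expN : a0 ^+ N = c.
Proof. exact: (rootCK N_gt0 c). Qed.

Lemma base_root_neq0 : a0 != 0.
Proof.
apply: contra_neq scalar_neq0 => a00.
by rewrite -base_root_expN a00 expr0n gtn_eqF // N_gt0.
Qed.

Local Notation rs := [seq a0 * w ^+ t | t <- iota 0 N].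

Lemma roots_uniq : uniq rs.
Proof.
rewrite map_inj_in_uniq ?iota_uniq // => t1 t2; rewrite !mem_iota /= => lt1 lt2.
move/(mulfI base_root_neq0)/eqP.
by rewrite (eq_prim_root_expr twist_root_prim) !modn_small // => /eqP.
Qed.

Lemma mxminpoly_u_dvd : mxminpoly u %| \prod_(r <- rs) ('X - r%:P).
Proof.
have XNc : 'X^N - c%:P = \prod_(r <- rs) ('X - r%:P).
  have size_XNc : size ('X^N - c%:P) = (size rs).+1.
    by rewrite size_XnsubC ?N_gt0 // size_map size_iota.
  have roots_XNc : all (root ('X^N - c%:P)) rs.
    apply/allP => _ /mapP [t _ ->].
    rewrite rootE !hornerE exprMn base_root_expN (exprAC w t N).
    by rewrite (prim_expr_order twist_root_prim) expr1n mulr1 subrr.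
  rewrite [LHS](all_roots_prod_XsubC size_XNc roots_XNc) ?uniq_rootsE ?roots_uniq //.
  by rewrite lead_coefXnsubC ?N_gt0 // scale1r.
rewrite -XNc mxminpoly_min // rmorphB /= rmorphXn /= horner_mx_X horner_mx_C uN.
by rewrite subrr.
Qed.

Lemma u_diagonalizable : exists2 Q, Q \in unitmx & exists D, u = invmx Q *m diag_mx D *m Q.
Proof.
have [Q Q_unit /(diagonalizable_forLR Q_unit) [D uD]] : diagonalizable u.
  by apply/diagonalizableP; exists rs; [exact: roots_uniq | exact: mxminpoly_u_dvd].
by exists Q => //; exists D; rewrite uD mxpoly.conjVmx.
Qed.

Section Diagonal.
Variables (Q : 'M[C]_n) (D : 'rV[C]_n).
Hypotheses (Q_unit : Q \in unitmx) (uQD : u = invmx Q *m diag_mx D *m Q).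

Local Notation spec := [seq D 0 i | i <- enum 'I_n].

Lemma char_poly_scale_u a : char_poly (a *: u) = \prod_(x <- spec) ('X - (a * x)%:P).
Proof.
have -> : a *: u = invmx Q *m diag_mx (a *: D) *m Q.
  rewrite uQD scalemxAl scalemxAr; congr (_ *m _ *m _).
  by apply/matrixP => i j; rewrite !mxE mulrnAr.
rewrite -{2}(invmxK Q) char_poly_conj ?unitmx_inv // char_poly_diag big_map big_enum /=.
by apply: eq_bigr => i _; rewrite mxE.
Qed.

Lemma spec_twist : perm_eq spec [seq w * x | x <- spec].
Proof.
have [h Hh uh] := twist_g; have h_unit := subgroup_SL_unit H_group Hh.
have conj_h : invmx h *m u *m invmx (invmx h) = w *: u.
  by rewrite invmxK -mulmxA uh -scalemxAr mulmxA mulVmx // mul1mx.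
apply: prod_XsubC_eq; rewrite [RHS]big_map -char_poly_scale_u -conj_h.
rewrite char_poly_conj ?unitmx_inv // -[u]scale1r char_poly_scale_u.
by apply: eq_bigr => x _; rewrite mul1r.
Qed.

Lemma count_spec_twist x : count_mem (w * x) spec = count_mem x spec.
Proof.
rewrite (seq.permP spec_twist) count_map; apply: eq_count => y /=.
by rewrite (inj_eq (mulfI _)) // expf_neq0 // (prim_root_eq0 xi_prim).
Qed.

Lemma spec_expr m b : u ^+ m = b%:M -> forall x, x \in spec -> x ^+ m = b.
Proof.
move=> um _ /mapP [i _ ->].
have : u ^+ m = invmx Q *m diag_mx (map_mx (horner 'X^m) D) *m Q.
  by rewrite -mxpoly.horner_mx_diag -mxpoly.horner_mx_uconjC // -uQD rmorphXn /= horner_mx_X.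
rewrite um => /(congr1 (fun M => Q *m M *m invmx Q)) /=.
rewrite !mulmxA mulmxV // mul1mx mulmxK // scalar_mxC mulmxK //.
by move/matrixP/(_ i i); rewrite !mxE eqxx !mulr1n hornerXn.
Qed.

Lemma spec_sub_roots : {subset spec <= rs}.
Proof.
move=> x x_spec; have xN := spec_expr uN x_spec.
have /(prim_rootP twist_root_prim) [t xt] : (x / a0) ^+ N = 1.
  by rewrite exprMn exprVn xN base_root_expN mulfV ?scalar_neq0.
apply/mapP; exists (val t); first by rewrite mem_iota leq0n add0n ltn_ord.
by rewrite -xt mulrC divfK ?base_root_neq0.
Qed.

Lemma count_spec_orbit t : count_mem (a0 * w ^+ t) spec = count_mem a0 spec.
Proof.
elim: t => [|t IHt]; first by rewrite expr0 mulr1.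
by rewrite exprS mulrCA count_spec_twist.
Qed.

Lemma spec_perm_blocks :
  perm_eq spec (flatten [seq nseq (count_mem a0 spec) r | r <- rs]).
Proof.
apply: perm_flatten_nseq roots_uniq spec_sub_roots _ => _ /mapP [t _ ->].
exact: count_spec_orbit.
Qed.

Lemma count_spec_base : count_mem a0 spec = g.
Proof.
have size_blocks m (s : seq C) : size (flatten [seq nseq m r | r <- s]) = (m * size s)%N.
  by elim: s => [|r s IHs] /=; rewrite ?muln0 // size_cat size_nseq IHs mulnS.
move: (perm_size spec_perm_blocks).
rewrite size_map size_enum_ord size_blocks size_map size_iota {1}n_eq_Ng mulnC.
by move/eqP; rewrite eqn_pmul2r ?N_gt0 // eq_sym => /eqP.
Qed.

Lemma spec_blocks : perm_eq spec (flatten [seq nseq g r | r <- rs]).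
Proof. by have := spec_perm_blocks; rewrite count_spec_base. Qed.

Lemma n_div_N : (n %/ N)%N = g.
Proof. by rewrite {1}n_eq_Ng mulKn // N_gt0. Qed.

Lemma block_diag_roots_entries :
  [seq a0 * xi ^+ (g * (i %/ g)) | i : 'I_n <- enum 'I_n] = flatten [seq nseq g r | r <- rs].
Proof.
have -> : [seq a0 * xi ^+ (g * (i %/ g)) | i : 'I_n <- enum 'I_n] =
    [seq a0 * w ^+ (i %/ g) | i <- iota 0 (N * g)].
  by rewrite -n_eq_Ng -val_enum_ord -map_comp; apply: eq_map => i /=; rewrite exprM.
by rewrite (map_iota_divn (fun t => a0 * w ^+ t)) // -map_comp.
Qed.

Lemma u_conj_block :
  exists2 P0, P0 \in unitmx & P0 *m u *m invmx P0 = a0 *: block_diag_roots n xi N.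
Proof.
have : perm_eq [seq a0 * xi ^+ (g * (i %/ g)) | i : 'I_n <- enum 'I_n] [tuple D 0 i | i < n].
  by rewrite block_diag_roots_entries perm_sym spec_blocks.
case/tuple_permP => p Ep.
have Dp i : D 0 (p i) = a0 * xi ^+ (g * (i %/ g)).
  have := congr1 (fun s => nth 0 s i) Ep.
  rewrite (nth_map i) ?size_enum_ord // nth_ord_enum => ->.
  by rewrite -tnth_nth !tnth_mktuple.
have Dp_block : diag_mx (\row_i D 0 (p i)) = a0 *: block_diag_roots n xi N.
  apply/matrixP => i j; rewrite /block_diag_roots n_div_N !mxE Dp.
  by rewrite mulrnAr.
have P0_unit : perm_mx p *m Q \in unitmx by rewrite unitmx_mul unitmx_perm.
exists (perm_mx p *m Q) => //; rewrite -Dp_block -perm_conj_diag.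
rewrite -[RHS](mulmxK P0_unit); congr (_ *m _).
by rewrite uQD !mulmxA mulmxK // mulmxKV ?unitmx_perm.
Qed.

Lemma base_root_expn : a0 ^+ n = (-1) ^+ (g * N.-1).
Proof.
have [P0 P0_unit conjP0] := u_conj_block.
have : \det (a0 *: block_diag_roots n xi N) = 1.
  by rewrite -conjP0 !det_mulmx det_inv det_u mulr1 mulfV // -unitfE -unitmxE.
have sum_blocks : (2 * \sum_(i < n) g * (i %/ g) = n * (g * N.-1))%N.
  rewrite [in LHS]n_eq_Ng sum_divn_blocks // -big_distrl -big_distrr /= mulnCA.
  have := double_sum_ord N; have := n_eq_Ng.
  move: (n %/ g)%N => M -> S2; move: (\sum_(t < M) t)%N S2 => S S2.
  by rewrite (_ : g * S * (2 * g) = g * g * (2 * S))%N ?S2; lia.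
rewrite detZ /block_diag_roots n_div_N det_diag; under eq_bigr do rewrite mxE.
rewrite prodrXr (prim_root_expr_half xi_prim sum_blocks).
move=> E; apply: (@mulIf _ ((-1) ^+ (g * N.-1))); first by rewrite signr_eq0.
by rewrite E -expr2 sqrr_sign.
Qed.

Lemma base_root_class :
  if odd N || ~~ odd g then exists k : nat, a0 = xi ^+ k
  else exists (mu : C) (k : nat), mu ^+ 2 = xi ^- (g * N.-1) /\ a0 = mu * xi ^+ k.
Proof.
have odd_exp : odd (g * N.-1) = ~~ (odd N || ~~ odd g).
  by rewrite oddM negb_or negbK andbC -[in RHS](prednK N_gt0) /=; case: odd.
case: ifP => parity.
  have := base_root_expn; rewrite -signr_odd odd_exp parity expr0.
  by move/(prim_rootP xi_prim) => [k ->]; exists k.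
move: parity => /negbT; rewrite negb_or negbK => /andP [N_even g_odd].
set mu := 2.-root (xi ^- (g * N.-1)).
have mu2 : mu ^+ 2 = xi ^- (g * N.-1) by rewrite rootCK.
have n_even : ~~ odd n by rewrite n_eq_Ng oddM negb_and N_even.
have n_half : (2 * (g * N.-1 * n./2) = n * (g * N.-1))%N.
  by rewrite mulnCA mul2n even_halfK // mulnC.
have mu_expn : mu ^+ n = a0 ^+ n.
  rewrite base_root_expn -[n in LHS]even_halfK // -mul2n exprM mu2 exprVn -exprM.
  by rewrite (prim_root_expr_half xi_prim n_half) invr_sign.
have mu_neq0 : mu != 0.
  apply: contra_eq_neq mu2 => ->.
  by rewrite expr0n eq_sym invr_eq0 expf_neq0 // (prim_root_eq0 xi_prim).
have /(prim_rootP xi_prim) [k a0k] : (a0 / mu) ^+ n = 1.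
  by rewrite exprMn exprVn -mu_expn mulfV // expf_neq0.
by exists mu, k; split=> //; rewrite -a0k mulrC divfK.
Qed.

Lemma proj_order_N d : proj_order xi u d -> d = N.
Proof.
move=> [d_gt0 [s us] d_min].
have a0_spec : a0 \in spec by rewrite -has_pred1 has_count count_spec_base.
have wa0_spec : w * a0 \in spec by rewrite -has_pred1 has_count count_spec_twist count_spec_base.
have N_dvd_d : (N %| d)%N.
  rewrite (prim_order_dvd twist_root_prim); apply/eqP/(mulIf (expf_neq0 d base_root_neq0)).
  by rewrite mul1r -exprMn !(spec_expr us).
have uN_center : in_center xi (u ^+ N).
  by have [i ci] := prim_rootP xi_prim scalar_expn; exists i; rewrite uN ci.
apply/eqP; rewrite eqn_leq (dvdn_leq d_gt0 N_dvd_d) andbT leqNgt; apply/negP => N_lt_d.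
by apply: (d_min N) => //; rewrite N_gt0.
Qed.

End Diagonal.
End Scalar.
End Spectrum.

Theorem mainTheorem2 (C : numClosedFieldType) (n : nat) (xi : C)
    (Hn : (0 < n)%N) (Hxi : n.-primitive_root xi)
    (H : 'M[C]_n -> Prop) (HH : subgroup_SL H) (Hirr : irreducible_sub H)
    (u : 'M[C]_n) (Hu : U_set xi H u) (d : nat) (Hd : proj_order xi u d) :
  (d %| n)%N /\
  exists lambda : C,
    [/\ lambda != 0,
        (if odd d || ~~ odd (n %/ d) then exists k : nat, lambda = xi ^+ k
         else exists (mu : C) (k : nat),
                mu ^+ 2 = xi ^- ((n %/ d) * d.-1) /\ lambda = mu * xi ^+ k) &
        exists P : 'M[C]_n,
          inSL P /\ P *m u *m invmx P = lambda *: block_diag_roots n xi d].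
Proof.
case: n Hn xi Hxi H HH Hirr u Hu Hd => // n' _ xi Hxi H HH Hirr u Hu Hd.
have [g [g_gt0 twist_g twist_iff]] := twist_generator u Hxi HH.
have twist_dvd k : twist_exponent xi H u k -> (g %| k)%N by move/twist_iff.
have [c uN] := expN_scalar Hxi HH Hirr Hu twist_dvd.
have [Q Q_unit [D uQD]] := u_diagonalizable Hxi HH Hu twist_dvd uN.
rewrite (proj_order_N Hxi HH Hu g_gt0 twist_g twist_dvd uN Q_unit uQD Hd).
rewrite (n_div_N Hxi HH twist_dvd); split.
  by rewrite [in X in (_ %| X)%N](n_eq_Ng Hxi HH twist_dvd) dvdn_mulr.
exists ((n'.+1 %/ g).-root c); split.
- exact (base_root_neq0 Hxi HH Hu twist_dvd uN).
- exact (base_root_class Hxi HH Hu g_gt0 twist_g twist_dvd uN Q_unit uQD).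
- have [P0 P0_unit conjP0] := u_conj_block Hxi HH Hu g_gt0 twist_g twist_dvd uN Q_unit uQD.
  by have [P [P_SL conjP]] := conj_SL u P0_unit; exists P; rewrite conjP.
Qed.
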